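(* Let $(X,d,\alpha)$ be a computable metric space. Let $S$ be a compact subset of $(X,d)$ and suppose $A_1,\dots,A_n$ are subsets of $S$ such that $S=A_1\cup\dots\cup A_n$ and such that $A_i$ is computable up to $S$ for each $i\in\{1,\dots,n\}$. Then $S$ is a computable compact set.
   Context: A computable metric space is a triple $(X,d,\alpha)$ where $(X,d)$ is a metric space and $\alpha=(\alpha_i)_{i\in\mathbb N}$ is a sequence with dense range in $(X,d)$ such that $(i,j)\mapsto d(\alpha_i,\alpha_j)$ is a computable function $\mathbb N^2\to\mathbb R$ (a function $g:\mathbb N^k\to\mathbb R$ is computable if there is a computable $G:\mathbb N^{k+1}\to\mathbb Q$ with $|g(x)-G(x,i)|<2^{-i}$ for all $x,i$). Fix a computable $q:\mathbb N\to\mathbb Q$ whose image is the set of positive rationals and computable $\tau_1,\tau_2:\mathbb N\to\mathbb N$ with $\{(\tau_1(i),\tau_2(i)):i\in\mathbb N\}=\mathbb N^2$; let $\lambda_i=\alpha_{\tau_1(i)}$, $\rho_i=q_{\tau_2(i)}$, $I_i=B(\lambda_i,\rho_i)$ (open ball). Fix computable $\sigma:\mathbb N^2\to\mathbb N$, $\eta:\mathbb N\to\mathbb N$ such that $\{(\sigma(j,0),\dots,\sigma(j,\eta(j))):j\in\mathbb N\}$ is the set of all nonempty finite sequences in $\mathbb N$; let $[j]=\{\sigma(j,i):0\le i\le\eta(j)\}$, $J_j=\bigcup_{i\in[j]}I_i$ and $\Lambda_j=\{\alpha_i:i\in[j]\}$. A compact $K$ is a computable compact set if $\{j:K\subseteq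 J_j\}$ and $\{i:K\cap I_i\ne\emptyset\}$ are computably enumerable. For $A,B\subseteq X$ and $\varepsilon>0$ write $A\prec_\varepsilon B$ if for each $a\in A$ there is $b\in B$ with $d(a,b)<\varepsilon$. For $A\subseteq S\subseteq X$, $A$ is computable up to $S$ if there is a computable $f:\mathbb N\to\mathbb N$ with $A\prec_{2^{-k}}\Lambda_{f(k)}$ and $\Lambda_{f(k)}\prec_{2^{-k}}S$ for all $k\in\mathbb N$. *)

From Stdlib Require Import Reals QArith Qreals List Arith.
Import ListNotations.
Open Scope R_scope.

(* A concrete model of computability: (partial) mu-recursive programs. *)
Inductive prog : Type :=
| PZero : prog
| PSucc : prog
| PProj : nat -> prog
| PComp : prog -> list prog -> prog
| PRec  : prog -> prog -> prog
| PMu   : prog -> prog.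

Inductive eval : prog -> list nat -> nat -> Prop :=
| ev_zero : forall v, eval PZero v 0
| ev_succ : forall x v, eval PSucc (x :: v) (S x)
| ev_proj : forall i v, (i < length v)%nat -> eval (PProj i) v (nth i v 0%nat)
| ev_comp : forall f gs v ys y,
    Forall2 (fun g z => eval g v z) gs ys -> eval f ys y -> eval (PComp f gs) v y
| ev_rec0 : forall f g v y, eval f v y -> eval (PRec f g) (0%nat :: v) y
| ev_recS : forall f g n v z y,
    eval (PRec f g) (n :: v) z -> eval g (n :: z :: v) y ->
    eval (PRec f g) (S n :: v) y
| ev_mu : forall f v n,
    eval f (n :: v) 0 ->
    (forall m, (m < n)%nat -> exists k, eval f (m :: v) (S k)) ->
    eval (PMu f) v n.

Definition computable1 (f : nat -> nat) : Prop :=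
  exists p, forall x, eval p [x] (f x).
Definition computable2 (f : nat -> nat -> nat) : Prop :=
  exists p, forall x y, eval p [x; y] (f x y).
Definition computable3 (f : nat -> nat -> nat -> nat) : Prop :=
  exists p, forall x y z, eval p [x; y; z] (f x y z).

Definition c_e (A : nat -> Prop) : Prop :=
  exists p, forall x, A x <-> exists y, eval p [x] y.

(* Rationals are coded by triples (a,b,c) of naturals as (a - b)/(c+1). *)
Definition qcode (a b c : nat) : Q :=
  Qmake (Z.of_nat a - Z.of_nat b) (Pos.of_succ_nat c).

Definition computableQ1 (q : nat -> Q) : Prop :=
  exists a b c, computable1 a /\ computable1 b /\ computable1 c /\
    forall i, q i == qcode (a i) (b i) (c i).

Definition computableR2 (g : nat -> nat -> R) : Prop :=
  exists a b c, computable3 a /\ computable3 b /\ computable3 c /\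
    forall x y i, Rabs (g x y - Q2R (qcode (a x y i) (b x y i) (c x y i)))
                  < / 2 ^ i.

Definition is_metric {X : Type} (d : X -> X -> R) : Prop :=
  (forall x y, 0 <= d x y) /\
  (forall x y, d x y = 0 <-> x = y) /\
  (forall x y, d x y = d y x) /\
  (forall x y z, d x z <= d x y + d y z).

Definition ball {X : Type} (d : X -> X -> R) (x : X) (r : R) : X -> Prop :=
  fun y => d x y < r.

Definition is_open {X : Type} (d : X -> X -> R) (U : X -> Prop) : Prop :=
  forall x, U x -> exists r, 0 < r /\ forall y, ball d x r y -> U y.

Definition compact_set {X : Type} (d : X -> X -> R) (S : X -> Prop) : Prop :=
  forall (I : Type) (U : I -> X -> Prop),
    (forall i, is_open d (U i)) ->
    (forall x, S x -> exists i, U i x) ->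
    exists l : list I, forall x, S x -> exists i, In i l /\ U i x.

Definition computable_metric_space {X : Type} (d : X -> X -> R)
  (alpha : nat -> X) : Prop :=
  is_metric d /\
  (forall x eps, 0 < eps -> exists i, d x (alpha i) < eps) /\
  computableR2 (fun i j => d (alpha i) (alpha j)).

Definition enum_data (q : nat -> Q) (tau1 tau2 : nat -> nat)
  (sigma : nat -> nat -> nat) (eta : nat -> nat) : Prop :=
  computableQ1 q /\
  (forall i, 0 < q i)%Q /\
  (forall r : Q, (0 < r)%Q -> exists i, q i == r) /\
  computable1 tau1 /\ computable1 tau2 /\
  (forall a b, exists i, tau1 i = a /\ tau2 i = b) /\
  computable2 sigma /\ computable1 eta /\
  (forall l : list nat, l <> [] ->
     exists j, length l = S (eta j) /\
               forall i, (i < length l)%nat -> nth i l 0%nat = sigma j i).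

Section Notions.
Context {X : Type} (d : X -> X -> R) (alpha : nat -> X) (q : nat -> Q)
  (tau1 tau2 : nat -> nat) (sigma : nat -> nat -> nat) (eta : nat -> nat).

Definition lam (i : nat) : X := alpha (tau1 i).
Definition rho (i : nat) : R := Q2R (q (tau2 i)).
Definition Iball (i : nat) : X -> Prop := ball d (lam i) (rho i).
Definition idx (j : nat) : nat -> Prop :=
  fun m => exists i, (i <= eta j)%nat /\ sigma j i = m.
Definition Jset (j : nat) : X -> Prop :=
  fun x => exists m, idx j m /\ Iball m x.
Definition Lambda (j : nat) : X -> Prop :=
  fun x => exists m, idx j m /\ x = alpha m.

Definition computable_compact (K : X -> Prop) : Prop :=
  compact_set d K /\
  c_e (fun j => forall x, K x -> Jset j x) /\
  c_e (fun i => exists x, K x /\ Iball i x).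
End Notions.

Definition prec {X : Type} (d : X -> X -> R) (eps : R) (A B : X -> Prop) : Prop :=
  forall a, A a -> exists b, B b /\ d a b < eps.

Definition computable_up_to {X : Type} (d : X -> X -> R) (alpha : nat -> X)
  (sigma : nat -> nat -> nat) (eta : nat -> nat) (A S : X -> Prop) : Prop :=
  exists f : nat -> nat, computable1 f /\
    forall k, prec d (/ 2 ^ k) A (Lambda alpha sigma eta (f k)) /\
              prec d (/ 2 ^ k) (Lambda alpha sigma eta (f k)) S.

(* A finite union J_j of basic balls covers the compact set S iff it covers S with
   a uniform margin 2^-P. Then, for M = P + 2, each point of the approximation
   Λ_{f_i(M)} of each A_i is 2^-M-close to S, so its M-approximate distance to the
   centre of some ball of J_j falls short of the radius by 2·2^-M. Conversely,
   such certificates for all points of all Λ_{f_i(M)} force S ⊆ J_j, because every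
   point of S lies in some A_i and hence within 2^-M of one of these points.
   Similarly, S meets I_m iff some point of some Λ_{f_i(M)} is certifiably well
   inside I_m. Both conditions read "there is M such that a decidable property of
   M holds", so they are computably enumerable. *)
From Stdlib Require Import Reals QArith Qreals List Arith Lia Lra IndefiniteDescription.
Import ListNotations.
Open Scope nat_scope.

(** * Total recursive functions *)

Lemma eval_deterministic : forall p v y1, eval p v y1 -> forall y2, eval p v y2 -> y1 = y2.
Proof.
  fix IH 4.
  intros p v y1 H.
  destruct H as [v|x v|i v Hi|f gs v ys y Hgs Hf|f g v y Hf|f g n v z y Hr Hg|f v n Hf Hlt];
    intros y2 H2.
  - inversion H2; reflexivity.
  - inversion H2; reflexivity.
  - inversion H2; reflexivity.
  - inversion H2 as [| | |f' gs' v' ys' y' Hgs' Hf'| | |]; subst.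
    assert (Eys : ys = ys').
    { clear Hf Hf' H2. revert ys' Hgs'. revert gs ys Hgs.
      fix IHgs 3.
      intros gs ys Hgs. destruct Hgs as [|g z gs ys Hgz Hrest]; intros ys' Hgs'.
      - inversion Hgs'; reflexivity.
      - inversion Hgs' as [|g' z' gs' ys'' Hgz' Hrest']; subst.
        f_equal; [exact (IH _ _ _ Hgz _ Hgz') | exact (IHgs _ _ Hrest _ Hrest')]. }
    subst. exact (IH _ _ _ Hf _ Hf').
  - inversion H2 as [| | | |f' g' v' y' Hf'| |]; subst.
    exact (IH _ _ _ Hf _ Hf').
  - inversion H2 as [| | | | |f' g' n' v' z' y' Hr' Hg'|]; subst.
    pose proof (IH _ _ _ Hr _ Hr') as Ez. subst.
    exact (IH _ _ _ Hg _ Hg').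
  - inversion H2 as [| | | | | |f' v' n' Hf' Hlt']; subst.
    destruct (Nat.lt_trichotomy n y2) as [Hc|[Hc|Hc]].
    + destruct (Hlt' n Hc) as [k Hk].
      discriminate (IH _ _ _ Hf _ Hk).
    + exact Hc.
    + destruct (Hlt y2 Hc) as [k Hk].
      discriminate (IH _ _ _ Hk _ Hf').
Qed.

Definition computable_n (k : nat) (f : list nat -> nat) : Prop :=
  exists p, forall v, length v = k -> eval p v (f v).

Notation computable_b k B := (computable_n k (fun v => Nat.b2n (B v))).
Local Notation arg i v := (nth i v 0).

Lemma computable_n_ext k f g :
  (forall v, length v = k -> f v = g v) -> computable_n k f -> computable_n k g.
Proof. intros Hfg [p Hp]. exists p. intros v Hv. rewrite <- Hfg by exact Hv. auto. Qed.

Lemma computable_n_zero k : computable_n k (fun _ => 0).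
Proof. exists PZero. intros; constructor. Qed.

Lemma computable_n_proj k i : i < k -> computable_n k (fun v => arg i v).
Proof. intros Hi. exists (PProj i). intros v Hv. constructor. lia. Qed.

Lemma computable_n_succ k g : computable_n k g -> computable_n k (fun v => S (g v)).
Proof.
  intros [p Hp]. exists (PComp PSucc [p]). intros v Hv.
  econstructor; [constructor; [apply Hp, Hv | constructor] | constructor].
Qed.

Lemma computable_n_const k c : computable_n k (fun _ => c).
Proof. induction c; [apply computable_n_zero | apply computable_n_succ, IHc]. Qed.

Lemma Forall_computable_n_programs k gs : Forall (computable_n k) gs ->
  exists ps, forall v, length v = k ->
    Forall2 (fun p z => eval p v z) ps (map (fun g => g v) gs).
Proof.
  induction 1 as [|g gs [p Hp] _ [ps Hps]].
  - exists []. intros; constructor.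
  - exists (p :: ps). intros v Hv. constructor; auto.
Qed.

Lemma computable_n_comp k h gs : computable_n (length gs) h -> Forall (computable_n k) gs ->
  computable_n k (fun v => h (map (fun g => g v) gs)).
Proof.
  intros [ph Hh] Hgs. destruct (Forall_computable_n_programs _ _ Hgs) as [ps Hps].
  exists (PComp ph ps). intros v Hv. econstructor; [apply Hps, Hv |].
  apply Hh. apply length_map.
Qed.

Lemma computable_n_app1 k h g :
  computable_n 1 h -> computable_n k g -> computable_n k (fun v => h [g v]).
Proof. intros Hh Hg. apply (computable_n_comp k h [g]); auto. Qed.

Lemma computable_n_app2 k h g1 g2 : computable_n 2 h ->
  computable_n k g1 -> computable_n k g2 -> computable_n k (fun v => h [g1 v; g2 v]).
Proof. intros Hh H1 H2. apply (computable_n_comp k h [g1; g2]); auto. Qed.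

Lemma computable_n_app3 k h g1 g2 g3 : computable_n 3 h ->
  computable_n k g1 -> computable_n k g2 -> computable_n k g3 ->
  computable_n k (fun v => h [g1 v; g2 v; g3 v]).
Proof. intros Hh H1 H2 H3. apply (computable_n_comp k h [g1; g2; g3]); auto. Qed.

Lemma map_nth_skipn w l :
  map (fun i => arg i (l ++ w)) (seq (length l) (length w)) = w.
Proof.
  revert l; induction w as [|a w IH]; intros l; [reflexivity|]. simpl.
  rewrite app_nth2, Nat.sub_diag by lia. f_equal.
  specialize (IH (l ++ [a])). rewrite <- app_assoc, length_app, Nat.add_1_r in IH.
  exact IH.
Qed.

Lemma Forall_computable_n_proj k off :
  Forall (computable_n (off + k)) (map (fun i v => arg i v) (seq off k)).
Proof.
  apply Forall_forall. intros g Hg. apply in_map_iff in Hg as [i [<- Hi]].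
  apply in_seq in Hi. apply computable_n_proj. lia.
Qed.

Lemma computable_n_cons k h e :
  computable_n (S k) h -> computable_n k e -> computable_n k (fun v => h (e v :: v)).
Proof.
  intros Hh He.
  assert (Hc := computable_n_comp k h (e :: map (fun i v => arg i v) (seq 0 k))).
  simpl in Hc. rewrite length_map, length_seq in Hc.
  specialize (Hc Hh (Forall_cons _ He (Forall_computable_n_proj k 0))).
  eapply computable_n_ext; [|exact Hc]. intros v Hv. simpl. rewrite map_map.
  do 2 f_equal. rewrite <- Hv. apply (map_nth_skipn v []).
Qed.

Definition prim_rec (f g : list nat -> nat) (v : list nat) : nat :=
  match v with
  | [] => 0
  | n :: w => nat_rect (fun _ => nat) (f w) (fun i z => g (i :: z :: w)) n
  end.

Lemma computable_n_prim_rec k f g :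
  computable_n k f -> computable_n (S (S k)) g -> computable_n (S k) (prim_rec f g).
Proof.
  intros [pf Hf] [pg Hg]. exists (PRec pf pg). intros [|n w] Hv; [discriminate|].
  injection Hv as Hw. simpl.
  induction n as [|n IH]; simpl.
  - constructor. auto.
  - econstructor; [exact IH | apply Hg; simpl; lia].
Qed.

Lemma computable_n_add : computable_n 2 (fun v => arg 0 v + arg 1 v).
Proof.
  assert (Hr : computable_n 2 (prim_rec (fun w => arg 0 w) (fun v => S (arg 1 v)))).
  { apply computable_n_prim_rec;
      [apply computable_n_proj | apply computable_n_succ, computable_n_proj]; lia. }
  eapply computable_n_ext; [|exact Hr].
  intros [|n [|m [|]]] Hv; try discriminate. simpl. clear.
  induction n; simpl; auto.
Qed.

Lemma computable_n_mul : computable_n 2 (fun v => arg 0 v * arg 1 v).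
Proof.
  assert (Hr : computable_n 2 (prim_rec (fun _ => 0) (fun v => arg 1 v + arg 2 v))).
  { apply computable_n_prim_rec; [apply computable_n_zero|].
    apply (computable_n_app2 3 _ _ _ computable_n_add);
      apply computable_n_proj; lia. }
  eapply computable_n_ext; [|exact Hr].
  intros [|n [|m [|]]] Hv; try discriminate. simpl. clear.
  induction n; simpl; lia.
Qed.

Lemma computable_n_pow2 : computable_n 1 (fun v => 2 ^ arg 0 v).
Proof.
  assert (Hr : computable_n 1 (prim_rec (fun _ => 1) (fun v => arg 1 v + arg 1 v))).
  { apply computable_n_prim_rec; [apply computable_n_const|].
    apply (computable_n_app2 2 _ _ _ computable_n_add);
      apply computable_n_proj; lia. }
  eapply computable_n_ext; [|exact Hr].
  intros [|n [|]] Hv; try discriminate. simpl. clear.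
  induction n; simpl; lia.
Qed.

Lemma computable_n_pred : computable_n 1 (fun v => pred (arg 0 v)).
Proof.
  assert (Hr : computable_n 1 (prim_rec (fun _ => 0) (fun v => arg 0 v))).
  { apply computable_n_prim_rec; [apply computable_n_zero | apply computable_n_proj; lia]. }
  eapply computable_n_ext; [|exact Hr].
  intros [|[|n] [|]] Hv; try discriminate; reflexivity.
Qed.

Lemma computable_n_sub : computable_n 2 (fun v => arg 1 v - arg 0 v).
Proof.
  assert (Hr : computable_n 2 (prim_rec (fun w => arg 0 w) (fun v => pred (arg 1 v)))).
  { apply computable_n_prim_rec; [apply computable_n_proj; lia|].
    apply (computable_n_app1 3 _ _ computable_n_pred), computable_n_proj; lia. }
  eapply computable_n_ext; [|exact Hr].
  intros [|n [|m [|]]] Hv; try discriminate. simpl. clear.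
  induction n; simpl; lia.
Qed.

Lemma computable_b_eqb0 : computable_b 1 (fun v => arg 0 v =? 0).
Proof.
  assert (Hr : computable_n 1 (prim_rec (fun _ => 1) (fun _ => 0))).
  { apply computable_n_prim_rec; [apply computable_n_const | apply computable_n_zero]. }
  eapply computable_n_ext; [|exact Hr].
  intros [|[|n] [|]] Hv; try discriminate; reflexivity.
Qed.

Lemma computable_b_ltb : computable_b 2 (fun v => arg 0 v <? arg 1 v).
Proof.
  assert (Hsub : computable_n 2 (fun v => S (arg 0 v) - arg 1 v)).
  { apply (computable_n_app2 2 _ _ _ computable_n_sub);
      [| apply computable_n_succ]; apply computable_n_proj; lia. }
  eapply computable_n_ext; [|exact (computable_n_app1 _ _ _ computable_b_eqb0 Hsub)].
  intros v _. change (Nat.b2n (S (arg 0 v) - arg 1 v =? 0) = Nat.b2n (arg 0 v <? arg 1 v)).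
  f_equal. apply Bool.eq_iff_eq_true. rewrite Nat.eqb_eq, Nat.ltb_lt. lia.
Qed.

Lemma computable_b_negb k B : computable_b k B -> computable_b k (fun v => negb (B v)).
Proof.
  intros H. eapply computable_n_ext; [|exact (computable_n_app1 k _ _ computable_b_eqb0 H)].
  intros v _. simpl. destruct (B v); reflexivity.
Qed.

Lemma computable_b_andb k B1 B2 :
  computable_b k B1 -> computable_b k B2 -> computable_b k (fun v => B1 v && B2 v).
Proof.
  intros H1 H2. eapply computable_n_ext; [|exact (computable_n_app2 k _ _ _ computable_n_mul H1 H2)].
  intros v _. simpl. destruct (B1 v), (B2 v); reflexivity.
Qed.

Lemma computable_b_orb k B1 B2 :
  computable_b k B1 -> computable_b k B2 -> computable_b k (fun v => B1 v || B2 v).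
Proof.
  intros H1 H2.
  eapply computable_n_ext;
    [|exact (computable_b_negb _ _ (computable_b_andb _ _ _
               (computable_b_negb _ _ H1) (computable_b_negb _ _ H2)))].
  intros v _. cbv beta. destruct (B1 v), (B2 v); reflexivity.
Qed.

Lemma computable_b_shift k B : computable_b (S k) B ->
  computable_n (S (S k)) (fun v => Nat.b2n (B (S (arg 0 v) :: skipn 2 v))).
Proof.
  intros H.
  assert (Hc := computable_n_comp (S (S k)) (fun v => Nat.b2n (B v))
     ((fun v => S (arg 0 v)) :: map (fun i v => arg i v) (seq 2 k))).
  simpl in Hc. rewrite length_map, length_seq in Hc.
  specialize (Hc H (Forall_cons _ (computable_n_succ _ _ (computable_n_proj (S (S k)) 0 ltac:(lia)))
                                  (Forall_computable_n_proj k 2))).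
  eapply computable_n_ext; [|exact Hc]. intros [|i [|z w]] Hv; try discriminate.
  simpl in Hv. injection Hv as Hw. rewrite map_map. simpl. do 3 f_equal.
  rewrite <- Hw. apply (map_nth_skipn w [i; z]).
Qed.

Lemma computable_b_forallb k B : computable_b (S k) B ->
  computable_b (S k) (fun v => forallb (fun t => B (t :: tl v)) (seq 0 (S (hd 0 v)))).
Proof.
  intros H.
  assert (Hr : computable_n (S k) (prim_rec (fun w => Nat.b2n (B (0 :: w)))
            (fun v => arg 1 v * Nat.b2n (B (S (arg 0 v) :: skipn 2 v))))).
  { apply computable_n_prim_rec.
    - exact (computable_n_cons k _ _ H (computable_n_const _ _)).
    - apply (computable_n_app2 _ _ _ _ computable_n_mul);
        [apply computable_n_proj; lia | exact (computable_b_shift k B H)]. }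
  eapply computable_n_ext; [|exact Hr]. intros [|N w] Hv; [discriminate|].
  cbn [prim_rec hd tl]. clear.
  induction N as [|N IHN]; [cbn; destruct (B (0 :: w)); reflexivity|].
  rewrite seq_S, forallb_app. cbn [nat_rect]. rewrite IHN. cbn [forallb Nat.add nth skipn].
  destruct (forallb _ _), (B (S N :: w)); reflexivity.
Qed.

Lemma computable_b_existsb k B : computable_b (S k) B ->
  computable_b (S k) (fun v => existsb (fun t => B (t :: tl v)) (seq 0 (S (hd 0 v)))).
Proof.
  intros H.
  assert (Hpos : computable_b (S (S k)) (fun v => negb (arg 1 v =? 0))).
  { apply computable_b_negb. apply (computable_n_app1 _ _ _ computable_b_eqb0).
    apply computable_n_proj; lia. }
  assert (Hr : computable_n (S k) (prim_rec (fun w => Nat.b2n (B (0 :: w)))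
            (fun v => Nat.b2n (negb (arg 1 v =? 0) || B (S (arg 0 v) :: skipn 2 v))))).
  { apply computable_n_prim_rec.
    - exact (computable_n_cons k _ _ H (computable_n_const _ _)).
    - exact (computable_b_orb _ _ _ Hpos (computable_b_shift k B H)). }
  eapply computable_n_ext; [|exact Hr]. intros [|N w] Hv; [discriminate|].
  cbn [prim_rec hd tl]. clear.
  induction N as [|N IHN]; [cbn; destruct (B (0 :: w)); reflexivity|].
  rewrite seq_S, existsb_app. cbn [nat_rect]. rewrite IHN. cbn [existsb Nat.add nth skipn].
  destruct (existsb _ _), (B (S N :: w)); reflexivity.
Qed.

Lemma computable_n_of1 f : computable1 f -> computable_n 1 (fun v => f (arg 0 v)).
Proof. intros [p Hp]. exists p. intros [|x [|]] Hv; try discriminate. apply Hp. Qed.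

Lemma computable_n_of2 f : computable2 f -> computable_n 2 (fun v => f (arg 0 v) (arg 1 v)).
Proof. intros [p Hp]. exists p. intros [|x [|y [|]]] Hv; try discriminate. apply Hp. Qed.

Lemma computable_n_of3 f :
  computable3 f -> computable_n 3 (fun v => f (arg 0 v) (arg 1 v) (arg 2 v)).
Proof. intros [p Hp]. exists p. intros [|x [|y [|z [|]]]] Hv; try discriminate. apply Hp. Qed.

(** * Bounded arithmetic formulas *)

Inductive term : Type :=
| TVar (i : nat)
| TConst (c : nat)
| TAdd (a b : term)
| TMul (a b : term)
| TPow2 (a : term)
| TApp1 (f : nat -> nat) (a : term)
| TApp2 (f : nat -> nat -> nat) (a b : term)
| TApp3 (f : nat -> nat -> nat -> nat) (a b c : term).

Fixpoint term_eval (e : list nat) (t : term) : nat :=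
  match t with
  | TVar i => arg i e
  | TConst c => c
  | TAdd a b => term_eval e a + term_eval e b
  | TMul a b => term_eval e a * term_eval e b
  | TPow2 a => 2 ^ term_eval e a
  | TApp1 f a => f (term_eval e a)
  | TApp2 f a b => f (term_eval e a) (term_eval e b)
  | TApp3 f a b c => f (term_eval e a) (term_eval e b) (term_eval e c)
  end.

Fixpoint term_wf (k : nat) (t : term) : Prop :=
  match t with
  | TVar i => i < k
  | TConst _ => True
  | TAdd a b | TMul a b => term_wf k a /\ term_wf k b
  | TPow2 a => term_wf k a
  | TApp1 f a => computable1 f /\ term_wf k a
  | TApp2 f a b => computable2 f /\ term_wf k a /\ term_wf k b
  | TApp3 f a b c => computable3 f /\ term_wf k a /\ term_wf k b /\ term_wf k c
  end.

Lemma computable_n_term t : forall k, term_wf k t -> computable_n k (fun e => term_eval e t).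
Proof.
  induction t; intros k Hwf; simpl in Hwf.
  - exact (computable_n_proj k i Hwf).
  - exact (computable_n_const k c).
  - destruct Hwf. exact (computable_n_app2 _ _ _ _ computable_n_add (IHt1 _ H) (IHt2 _ H0)).
  - destruct Hwf. exact (computable_n_app2 _ _ _ _ computable_n_mul (IHt1 _ H) (IHt2 _ H0)).
  - exact (computable_n_app1 _ _ _ computable_n_pow2 (IHt _ Hwf)).
  - destruct Hwf. exact (computable_n_app1 _ _ _ (computable_n_of1 _ H) (IHt _ H0)).
  - destruct Hwf as (? & ? & ?).
    exact (computable_n_app2 _ _ _ _ (computable_n_of2 _ H) (IHt1 _ H0) (IHt2 _ H1)).
  - destruct Hwf as (? & ? & ? & ?).
    exact (computable_n_app3 _ _ _ _ _ (computable_n_of3 _ H) (IHt1 _ H0) (IHt2 _ H1) (IHt3 _ H2)).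
Qed.

(* Quantifiers are bounded and use de Bruijn indices: [FAll b p] holds in [e]
   when [p] holds in [t :: e] for every [t <= b]. *)
Inductive formula : Type :=
| FLt (a b : term)
| FAnd (p q : formula)
| FOr (p q : formula)
| FNot (p : formula)
| FTrue
| FFalse
| FAll (b : term) (p : formula)
| FEx (b : term) (p : formula).

Fixpoint formula_eval (e : list nat) (p : formula) : bool :=
  match p with
  | FLt a b => term_eval e a <? term_eval e b
  | FAnd p q => formula_eval e p && formula_eval e q
  | FOr p q => formula_eval e p || formula_eval e q
  | FNot p => negb (formula_eval e p)
  | FTrue => true
  | FFalse => false
  | FAll b p => forallb (fun t => formula_eval (t :: e) p) (seq 0 (S (term_eval e b)))
  | FEx b p => existsb (fun t => formula_eval (t :: e) p) (seq 0 (S (term_eval e b)))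
  end.

Fixpoint formula_wf (k : nat) (p : formula) : Prop :=
  match p with
  | FLt a b => term_wf k a /\ term_wf k b
  | FAnd p q | FOr p q => formula_wf k p /\ formula_wf k q
  | FNot p => formula_wf k p
  | FTrue | FFalse => True
  | FAll b p | FEx b p => term_wf k b /\ formula_wf (S k) p
  end.

Lemma computable_b_formula p : forall k, formula_wf k p -> computable_b k (fun e => formula_eval e p).
Proof.
  induction p; intros k Hwf; simpl in Hwf.
  - destruct Hwf as [Ha Hb].
    exact (computable_n_app2 _ _ _ _ computable_b_ltb (computable_n_term _ _ Ha) (computable_n_term _ _ Hb)).
  - destruct Hwf. apply computable_b_andb; auto.
  - destruct Hwf. apply computable_b_orb; auto.
  - apply computable_b_negb; auto.
  - exact (computable_n_const k 1).
  - exact (computable_n_const k 0).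
  - destruct Hwf as [Hb Hp].
    exact (computable_n_cons _ _ _ (computable_b_forallb k _ (IHp _ Hp)) (computable_n_term _ _ Hb)).
  - destruct Hwf as [Hb Hp].
    exact (computable_n_cons _ _ _ (computable_b_existsb k _ (IHp _ Hp)) (computable_n_term _ _ Hb)).
Qed.

Lemma formula_eval_FAll e b p : formula_eval e (FAll b p) = true <->
  forall t, t <= term_eval e b -> formula_eval (t :: e) p = true.
Proof.
  cbn [formula_eval]. rewrite forallb_forall.
  split; intros H t Ht; apply H; apply in_seq in Ht || apply in_seq; lia.
Qed.

Lemma formula_eval_FEx e b p : formula_eval e (FEx b p) = true <->
  exists t, t <= term_eval e b /\ formula_eval (t :: e) p = true.
Proof.
  cbn [formula_eval]. rewrite existsb_exists.
  split; intros [t [Ht H]]; exists t; split; auto; [apply in_seq in Ht | apply in_seq]; lia.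
Qed.

Fixpoint FAnd_range (B : nat -> formula) (n : nat) : formula :=
  match n with 0 => FTrue | S m => FAnd (FAnd_range B m) (B n) end.

Fixpoint FOr_range (B : nat -> formula) (n : nat) : formula :=
  match n with 0 => FFalse | S m => FOr (FOr_range B m) (B n) end.

Lemma formula_eval_FAnd_range B n e : formula_eval e (FAnd_range B n) = true <->
  forall i, 1 <= i <= n -> formula_eval e (B i) = true.
Proof.
  induction n as [|n IHn]; simpl; [split; auto; intros _ i Hi; lia|].
  rewrite Bool.andb_true_iff, IHn. split.
  - intros [Hn HSn] i Hi. destruct (Nat.eq_dec i (S n)); [subst; auto | apply Hn; lia].
  - intros H; split; [intros; apply H|apply H]; lia.
Qed.

Lemma formula_eval_FOr_range B n e : formula_eval e (FOr_range B n) = true <->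
  exists i, 1 <= i <= n /\ formula_eval e (B i) = true.
Proof.
  induction n as [|n IHn]; simpl; [split; [discriminate | intros [i [Hi _]]; lia]|].
  rewrite Bool.orb_true_iff, IHn. split.
  - intros [[i [Hi H]]|H]; [exists i | exists (S n)]; split; auto; lia.
  - intros [i [Hi H]]. destruct (Nat.eq_dec i (S n)); [subst; auto | left; exists i; split; auto; lia].
Qed.

Lemma formula_wf_FAnd_range B n k :
  (forall i, 1 <= i <= n -> formula_wf k (B i)) -> formula_wf k (FAnd_range B n).
Proof. induction n; simpl; auto. intros H. split; [apply IHn; intros|]; apply H; lia. Qed.

Lemma formula_wf_FOr_range B n k :
  (forall i, 1 <= i <= n -> formula_wf k (B i)) -> formula_wf k (FOr_range B n).
Proof. induction n; simpl; auto. intros H. split; [apply IHn; intros|]; apply H; lia. Qed.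

Lemma exists_least_true (P : nat -> bool) n : P n = true ->
  exists m, P m = true /\ forall k, k < m -> P k = false.
Proof.
  revert P. induction n as [|n IHn]; intros P HP.
  - exists 0. split; auto. intros; lia.
  - destruct (P 0) eqn:E; [exists 0; split; auto; intros; lia|].
    destruct (IHn (fun k => P (S k)) HP) as [m [Hm Hl]].
    exists (S m). split; auto. intros [|k] Hk; auto. apply Hl. lia.
Qed.

Lemma c_e_ext (P Q : nat -> Prop) : (forall x, P x <-> Q x) -> c_e P -> c_e Q.
Proof. intros H [p Hp]. exists p. intros x. rewrite <- H. apply Hp. Qed.

Lemma c_e_exists_formula p : formula_wf 2 p ->
  c_e (fun x => exists M, formula_eval [M; x] p = true).
Proof.
  intros Hwf. destruct (computable_b_formula (FNot p) 2 Hwf) as [pn Hpn].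
  exists (PMu pn). intros x. split.
  - intros [M HM].
    destruct (exists_least_true (fun M => formula_eval [M; x] p) M HM) as [m [Hm Hl]].
    exists m. constructor.
    + specialize (Hpn [m; x] eq_refl). simpl in Hpn. rewrite Hm in Hpn. exact Hpn.
    + intros k Hk. exists 0. specialize (Hpn [k; x] eq_refl). simpl in Hpn.
      rewrite Hl in Hpn by exact Hk. exact Hpn.
  - intros [y Hy]. exists y. inversion Hy as [| | | | | |f v n Hy0 _]; subst.
    specialize (Hpn [y; x] eq_refl).
    pose proof (eval_deterministic _ _ _ Hpn _ Hy0) as E. simpl in E.
    destruct (formula_eval [y; x] p); [reflexivity | discriminate].
Qed.

(** * Rational approximations *)

Open Scope R_scope.

Lemma Q2R_qcode a b c : Q2R (qcode a b c) = (INR a - INR b) / (INR c + 1).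
Proof.
  unfold Q2R, qcode. simpl. rewrite minus_IZR, <- !INR_IZR_INZ.
  rewrite Znat.Zpos_P_of_succ_nat, succ_IZR, <- INR_IZR_INZ. reflexivity.
Qed.

(* Clearing the denominators [c + 1], [c' + 1] and [2 ^ M] turns the comparison
   into one between natural numbers, with the negative parts moved across. *)
Lemma qcode_margin_lt_iff a b c a' b' c' M :
  (a * (c' + 1) * 2 ^ M + 2 * (c + 1) * (c' + 1) + b' * (c + 1) * 2 ^ M <
   a' * (c + 1) * 2 ^ M + b * (c' + 1) * 2 ^ M)%nat <->
  Q2R (qcode a b c) + 2 / 2 ^ M < Q2R (qcode a' b' c').
Proof.
  rewrite !Q2R_qcode.
  assert (HC : 0 < INR c + 1) by (pose proof (pos_INR c); lra).
  assert (HC' : 0 < INR c' + 1) by (pose proof (pos_INR c'); lra).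
  assert (HP : 0 < 2 ^ M) by (apply pow_lt; lra).
  set (C := INR c + 1) in *. set (C' := INR c' + 1) in *. set (P := 2 ^ M) in *.
  assert (HCCP : 0 < C * C' * P) by (apply Rmult_lt_0_compat; [apply Rmult_lt_0_compat|]; lra).
  split; intros H.
  - apply lt_INR in H. rewrite !plus_INR, !mult_INR, !pow_INR, !plus_INR in H.
    simpl (INR 1) in H. simpl (INR 2) in H. replace (1 + 1) with 2 in H by ring.
    fold P C C' in H.
    apply (Rmult_lt_reg_l (C * C' * P)); [exact HCCP|].
    replace (C * C' * P * ((INR a - INR b) / C + 2 / P))
      with (INR a * C' * P + 2 * C * C' - INR b * C' * P) by (field; lra).
    replace (C * C' * P * ((INR a' - INR b') / C'))
      with (INR a' * C * P - INR b' * C * P) by (field; lra).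
    lra.
  - apply INR_lt. rewrite !plus_INR, !mult_INR, !pow_INR, !plus_INR.
    simpl (INR 1). simpl (INR 2). replace (1 + 1) with 2 by ring. fold P C C'.
    apply (Rmult_lt_compat_l (C * C' * P)) in H; [|exact HCCP].
    replace (C * C' * P * ((INR a - INR b) / C + 2 / P))
      with (INR a * C' * P + 2 * C * C' - INR b * C' * P) in H by (field; lra).
    replace (C * C' * P * ((INR a' - INR b') / C'))
      with (INR a' * C * P - INR b' * C * P) in H by (field; lra).
    lra.
Qed.

Lemma exists_inv_pow2_lt eps : 0 < eps -> exists P, / 2 ^ P < eps.
Proof.
  intros Heps. destruct (pow_lt_1_zero (/ 2) ltac:(rewrite Rabs_pos_eq; lra) eps Heps) as [P HP].
  exists P. specialize (HP P (le_n P)). rewrite pow_inv, Rabs_pos_eq in HP; [exact HP|].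
  apply Rlt_le, Rinv_0_lt_compat, pow_lt; lra.
Qed.

Lemma inv_pow2_le a b : (a <= b)%nat -> / 2 ^ b <= / 2 ^ a.
Proof. intros H. apply Rinv_le_contravar; [apply pow_lt; lra | apply Rle_pow; [lra | exact H]]. Qed.

Lemma inv_pow2_add2 P : / 2 ^ P = 4 * / 2 ^ (P + 2).
Proof. rewrite pow_add. assert (2 ^ P <> 0) by (apply pow_nonzero; lra). simpl. field. auto. Qed.

(** * Certified inclusions in basic balls *)

(* [dq u v M] is an approximation of [d (alpha u) (alpha v)] to within [2^-M]; the
   inequality certifies that the ball of radius [2^-M] about [alpha u] lies in [I_m]. *)
Definition certified_in (q : nat -> Q) (tau1 tau2 : nat -> nat)
  (dq : nat -> nat -> nat -> R) (u m M : nat) : Prop :=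
  dq u (tau1 m) M + 2 / 2 ^ M < rho q tau2 m.

Section Certificates.
Variables (X : Type) (d : X -> X -> R) (alpha : nat -> X).
Variables (q : nat -> Q) (tau1 tau2 : nat -> nat) (sigma : nat -> nat -> nat) (eta : nat -> nat).
Variable dq : nat -> nat -> nat -> R.
Hypothesis d_sym : forall x y, d x y = d y x.
Hypothesis d_tri : forall x y z, d x z <= d x y + d y z.
Hypothesis dq_approx : forall u v M, Rabs (d (alpha u) (alpha v) - dq u v M) < / 2 ^ M.

Lemma certified_in_sound u m M x : certified_in q tau1 tau2 dq u m M ->
  d (alpha u) x < / 2 ^ M -> Iball d alpha q tau1 tau2 m x.
Proof.
  unfold certified_in, Iball, ball, lam. intros Hc Hx.
  pose proof (Rabs_def2 _ _ (dq_approx u (tau1 m) M)).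
  pose proof (d_tri (alpha (tau1 m)) (alpha u) x) as Htri.
  rewrite (d_sym (alpha (tau1 m)) (alpha u)) in Htri. unfold Rdiv in Hc. lra.
Qed.

Lemma certified_in_complete u m P x :
  d (lam alpha tau1 m) x + / 2 ^ P < rho q tau2 m ->
  d (alpha u) x < / 2 ^ (P + 2) -> certified_in q tau1 tau2 dq u m (P + 2).
Proof.
  unfold certified_in, lam. rewrite inv_pow2_add2. intros Hm Hx.
  pose proof (Rabs_def2 _ _ (dq_approx u (tau1 m) (P + 2))).
  pose proof (d_tri (alpha u) x (alpha (tau1 m))) as Htri.
  rewrite (d_sym x (alpha (tau1 m))) in Htri. unfold Rdiv. lra.
Qed.

(* A Lebesgue-number argument: the balls shrunk by [2^-p] for all [p] form an
   open cover, and a finite subcover yields a uniform [p]. *)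
Lemma compact_uniform_margin (S : X -> Prop) (I : nat -> Prop) (c : nat -> X) (r : nat -> R) :
  compact_set d S -> (forall x, S x -> exists m, I m /\ d (c m) x < r m) ->
  exists P, forall x, S x -> exists m, I m /\ d (c m) x + / 2 ^ P < r m.
Proof.
  intros HS Hcov.
  set (U := fun (mp : nat * nat) x => I (fst mp) /\ d (c (fst mp)) x + / 2 ^ snd mp < r (fst mp)).
  destruct (HS _ U) as [l Hl].
  - intros [m p] x [Hm Hx]. simpl in *.
    exists (r m - / 2 ^ p - d (c m) x). split; [lra|].
    intros y Hy. unfold ball in Hy. split; [exact Hm|]. simpl.
    pose proof (d_tri (c m) x y). lra.
  - intros x Sx. destruct (Hcov x Sx) as [m [Hm Hx]].
    destruct (exists_inv_pow2_lt (r m - d (c m) x)) as [p Hp]; [lra|].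
    exists (m, p). split; [exact Hm | simpl; lra].
  - exists (list_max (map snd l)). intros x Sx.
    destruct (Hl x Sx) as [[m p] [Hin [Hm Hx]]]. simpl in Hm, Hx.
    exists m. split; [exact Hm|].
    assert (Hp : (p <= list_max (map snd l))%nat).
    { apply (proj1 (Forall_forall _ _) (proj1 (list_max_le _ _) (le_n _))).
      exact (in_map snd _ _ Hin). }
    pose proof (inv_pow2_le _ _ Hp). lra.
Qed.

Lemma Lambda_inv k y : Lambda alpha sigma eta k y ->
  exists t, (t <= eta k)%nat /\ y = alpha (sigma k t).
Proof. intros [m [[t [Ht <-]] ->]]. exists t. auto. Qed.

Lemma Lambda_point k t : (t <= eta k)%nat -> Lambda alpha sigma eta k (alpha (sigma k t)).
Proof. intros Ht. exists (sigma k t). split; [exists t|]; auto. Qed.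

Variables (S : X -> Prop) (n : nat) (A : nat -> X -> Prop) (F : nat -> nat -> nat).
Hypothesis S_cover : forall x, S x -> exists i, (1 <= i <= n)%nat /\ A i x.
Hypothesis F_approx : forall i, (1 <= i <= n)%nat -> forall k,
  prec d (/ 2 ^ k) (A i) (Lambda alpha sigma eta (F i k)) /\
  prec d (/ 2 ^ k) (Lambda alpha sigma eta (F i k)) S.

Lemma A_near_Lambda i M x : (1 <= i <= n)%nat -> A i x ->
  exists t, (t <= eta (F i M))%nat /\ d (alpha (sigma (F i M) t)) x < / 2 ^ M.
Proof.
  intros Hi Ax. destruct (proj1 (F_approx i Hi M) x Ax) as [y [Hy Hxy]].
  destruct (Lambda_inv _ _ Hy) as [t [Ht ->]]. exists t. rewrite d_sym. auto.
Qed.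

Lemma Lambda_near_S i M t : (1 <= i <= n)%nat -> (t <= eta (F i M))%nat ->
  exists y, S y /\ d (alpha (sigma (F i M) t)) y < / 2 ^ M.
Proof. intros Hi Ht. exact (proj2 (F_approx i Hi M) _ (Lambda_point _ _ Ht)). Qed.

Lemma subset_Jset_iff j : compact_set d S ->
  (forall x, S x -> Jset d alpha q tau1 tau2 sigma eta j x) <->
  exists M, forall i, (1 <= i <= n)%nat -> forall t, (t <= eta (F i M))%nat ->
    exists s, (s <= eta j)%nat /\ certified_in q tau1 tau2 dq (sigma (F i M) t) (sigma j s) M.
Proof.
  intros HS. split.
  - intros HJ.
    destruct (compact_uniform_margin S (idx sigma eta j) (lam alpha tau1) (rho q tau2) HS HJ)
      as [P HP].
    exists (P + 2)%nat. intros i Hi t Ht.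
    destruct (Lambda_near_S i (P + 2) t Hi Ht) as [y [Sy Hy]].
    destruct (HP y Sy) as [m [[s [Hs <-]] Hm]].
    exists s. split; [exact Hs|]. exact (certified_in_complete _ _ _ _ Hm Hy).
  - intros [M HM] x Sx.
    destruct (S_cover x Sx) as [i [Hi Ax]].
    destruct (A_near_Lambda i M x Hi Ax) as [t [Ht Hx]].
    destruct (HM i Hi t Ht) as [s [Hs Hc]].
    exists (sigma j s). split; [exists s; auto|]. exact (certified_in_sound _ _ _ _ Hc Hx).
Qed.

Lemma meets_Iball_iff m :
  (exists x, S x /\ Iball d alpha q tau1 tau2 m x) <->
  exists M, exists i, (1 <= i <= n)%nat /\
    exists t, (t <= eta (F i M))%nat /\ certified_in q tau1 tau2 dq (sigma (F i M) t) m M.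
Proof.
  split.
  - intros [x [Sx Hx]]. unfold Iball, ball in Hx.
    destruct (exists_inv_pow2_lt (rho q tau2 m - d (lam alpha tau1 m) x)) as [P HP]; [lra|].
    destruct (S_cover x Sx) as [i [Hi Ax]].
    destruct (A_near_Lambda i (P + 2) x Hi Ax) as [t [Ht Hxt]].
    exists (P + 2)%nat, i. split; [exact Hi|]. exists t. split; [exact Ht|].
    apply (certified_in_complete _ _ _ x); [lra | exact Hxt].
  - intros [M [i [Hi [t [Ht Hc]]]]].
    destruct (Lambda_near_S i M t Hi Ht) as [y [Sy Hy]].
    exists y. split; [exact Sy|]. exact (certified_in_sound _ _ _ _ Hc Hy).
Qed.

End Certificates.

(** * Enumerability of the certificates *)

Section Enumerability.
Variables (ga gb gc : nat -> nat -> nat -> nat) (qa qb qc : nat -> nat) (q : nat -> Q).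
Variables (tau1 tau2 : nat -> nat) (sigma : nat -> nat -> nat) (eta : nat -> nat).
Hypotheses (ga_comp : computable3 ga) (gb_comp : computable3 gb) (gc_comp : computable3 gc).
Hypotheses (qa_comp : computable1 qa) (qb_comp : computable1 qb) (qc_comp : computable1 qc).
Hypotheses (tau1_comp : computable1 tau1) (tau2_comp : computable1 tau2).
Hypotheses (sigma_comp : computable2 sigma) (eta_comp : computable1 eta).
Hypothesis q_code : forall i, q i == qcode (qa i) (qb i) (qc i).

Definition dQ (u v M : nat) : R := Q2R (qcode (ga u v M) (gb u v M) (gc u v M)).

(* [certified_in] written out via [qcode_margin_lt_iff]. *)
Definition certified_fm (u m M : term) : formula :=
  let a := TApp3 ga u (TApp1 tau1 m) M in
  let b := TApp3 gb u (TApp1 tau1 m) M in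
  let c := TApp3 gc u (TApp1 tau1 m) M in
  let a' := TApp1 qa (TApp1 tau2 m) in
  let b' := TApp1 qb (TApp1 tau2 m) in
  let c' := TApp1 qc (TApp1 tau2 m) in
  let c1 := TAdd c (TConst 1) in
  let c1' := TAdd c' (TConst 1) in
  FLt (TAdd (TAdd (TMul (TMul a c1') (TPow2 M)) (TMul (TMul (TConst 2) c1) c1'))
            (TMul (TMul b' c1) (TPow2 M)))
      (TAdd (TMul (TMul a' c1) (TPow2 M)) (TMul (TMul b c1') (TPow2 M))).

Lemma formula_eval_certified_fm e u m M : formula_eval e (certified_fm u m M) = true <->
  certified_in q tau1 tau2 dQ (term_eval e u) (term_eval e m) (term_eval e M).
Proof.
  unfold certified_in, rho, dQ. rewrite (Qeq_eqR _ _ (q_code _)), <- qcode_margin_lt_iff.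
  unfold certified_fm. cbn [formula_eval]. rewrite Nat.ltb_lt. reflexivity.
Qed.

(* In the body the context is [s; t; M; j]. *)
Definition subset_fm (f : nat -> nat) : formula :=
  FAll (TApp1 eta (TApp1 f (TVar 0)))
    (FEx (TApp1 eta (TVar 2))
       (certified_fm (TApp2 sigma (TApp1 f (TVar 2)) (TVar 1)) (TApp2 sigma (TVar 3) (TVar 0))
          (TVar 2))).

(* In the body the context is [t; M; m]. *)
Definition meets_fm (f : nat -> nat) : formula :=
  FEx (TApp1 eta (TApp1 f (TVar 0)))
    (certified_fm (TApp2 sigma (TApp1 f (TVar 1)) (TVar 0)) (TVar 2) (TVar 1)).

Lemma formula_eval_subset_fm f M j : formula_eval [M; j] (subset_fm f) = true <->
  forall t, (t <= eta (f M))%nat ->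
    exists s, (s <= eta j)%nat /\ certified_in q tau1 tau2 dQ (sigma (f M) t) (sigma j s) M.
Proof.
  unfold subset_fm. rewrite formula_eval_FAll.
  split; intros H t Ht; specialize (H t Ht); revert H.
  - rewrite formula_eval_FEx. intros [s [Hs H]]. exists s.
    split; [exact Hs | exact (proj1 (formula_eval_certified_fm _ _ _ _) H)].
  - intros [s [Hs H]]. apply formula_eval_FEx. exists s.
    split; [exact Hs | apply formula_eval_certified_fm, H].
Qed.

Lemma formula_eval_meets_fm f M m : formula_eval [M; m] (meets_fm f) = true <->
  exists t, (t <= eta (f M))%nat /\ certified_in q tau1 tau2 dQ (sigma (f M) t) m M.
Proof.
  unfold meets_fm. rewrite formula_eval_FEx.
  split; intros [t [Ht H]]; exists t; split; try exact Ht.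
  - exact (proj1 (formula_eval_certified_fm _ _ _ _) H).
  - apply formula_eval_certified_fm, H.
Qed.

Variables (n : nat) (F : nat -> nat -> nat).
Hypothesis F_comp : forall i, (1 <= i <= n)%nat -> computable1 (F i).

Lemma c_e_subset_certificate :
  c_e (fun j => exists M, forall i, (1 <= i <= n)%nat -> forall t, (t <= eta (F i M))%nat ->
    exists s, (s <= eta j)%nat /\ certified_in q tau1 tau2 dQ (sigma (F i M) t) (sigma j s) M).
Proof.
  eapply c_e_ext; [|apply (c_e_exists_formula (FAnd_range (fun i => subset_fm (F i)) n))].
  - intros j. split; intros [M HM]; exists M; revert HM; rewrite formula_eval_FAnd_range.
    + intros HM i Hi. apply formula_eval_subset_fm, HM, Hi.
    + intros HM i Hi. apply formula_eval_subset_fm, HM, Hi.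
  - apply formula_wf_FAnd_range. intros i Hi. pose proof (F_comp i Hi).
    simpl. repeat split; auto; lia.
Qed.

Lemma c_e_meets_certificate :
  c_e (fun m => exists M, exists i, (1 <= i <= n)%nat /\
    exists t, (t <= eta (F i M))%nat /\ certified_in q tau1 tau2 dQ (sigma (F i M) t) m M).
Proof.
  eapply c_e_ext; [|apply (c_e_exists_formula (FOr_range (fun i => meets_fm (F i)) n))].
  - intros m. split; intros [M HM]; exists M; revert HM; rewrite formula_eval_FOr_range.
    + intros [i [Hi HM]]. exists i. split; [exact Hi | apply formula_eval_meets_fm, HM].
    + intros [i [Hi HM]]. exists i. split; [exact Hi | apply formula_eval_meets_fm, HM].
  - apply formula_wf_FOr_range. intros i Hi. pose proof (F_comp i Hi).
    simpl. repeat split; auto; lia.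
Qed.

End Enumerability.

Theorem proposition4p2 (X : Type) (d : X -> X -> R) (alpha : nat -> X)
  (q : nat -> Q) (tau1 tau2 : nat -> nat) (sigma : nat -> nat -> nat)
  (eta : nat -> nat)
  (Hcms : computable_metric_space d alpha)
  (Henum : enum_data q tau1 tau2 sigma eta)
  (S : X -> Prop) (HS : compact_set d S)
  (n : nat) (A : nat -> X -> Prop)
  (HAS : forall i, (1 <= i <= n)%nat -> forall x, A i x -> S x)
  (Hcover : forall x, S x -> exists i, (1 <= i <= n)%nat /\ A i x)
  (Hcomp : forall i, (1 <= i <= n)%nat -> computable_up_to d alpha sigma eta (A i) S) :
  computable_compact d alpha q tau1 tau2 sigma eta S.
Proof.
  destruct Hcms as [(_ & _ & d_sym & d_tri) (_ & ga & gb & gc & Hga & Hgb & Hgc & d_approx)].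
  destruct Henum as [(qa & qb & qc & Hqa & Hqb & Hqc & q_code) (_ & _ & Ht1 & Ht2 & _ & Hsig & Heta & _)].
  destruct (functional_choice (fun i f => (1 <= i <= n)%nat -> computable1 f /\ forall k,
      prec d (/ 2 ^ k) (A i) (Lambda alpha sigma eta (f k)) /\
      prec d (/ 2 ^ k) (Lambda alpha sigma eta (f k)) S)) as [F HF].
  { intros i. destruct (le_lt_dec 1 i); [destruct (le_lt_dec i n)|].
    - destruct (Hcomp i ltac:(lia)) as [f Hf]. exists f. auto.
    - exists (fun k => k). lia.
    - exists (fun k => k). lia. }
  assert (F_comp : forall i, (1 <= i <= n)%nat -> computable1 (F i)) by (intros; apply HF; auto).
  assert (F_approx := fun i Hi => proj2 (HF i Hi)).
  split; [exact HS | split].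
  - eapply c_e_ext; [|exact (c_e_subset_certificate _ _ _ _ _ _ _ _ _ _ _
                              Hga Hgb Hgc Hqa Hqb Hqc Ht1 Ht2 Hsig Heta q_code n F F_comp)].
    intros j. symmetry. exact (subset_Jset_iff _ _ _ _ _ _ _ _ _ d_sym d_tri d_approx
                                 S n A F Hcover F_approx j HS).
  - eapply c_e_ext; [|exact (c_e_meets_certificate _ _ _ _ _ _ _ _ _ _ _
                              Hga Hgb Hgc Hqa Hqb Hqc Ht1 Ht2 Hsig Heta q_code n F F_comp)].
    intros m. symmetry. exact (meets_Iball_iff _ _ _ _ _ _ _ _ _ d_sym d_tri d_approx
                                 S n A F Hcover F_approx m).
Qed.
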